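(* Let $t_1,\dots,t_n$ be basic terms, $\kappa$ a time variable, and $\Delta$ the saturation of the sample set $\{t_1[\kappa],\dots,t_n[\kappa]\}$. Then $\mathbf{W}\not\models 1\le t_1\vee\cdots\vee t_n$ if, and only if, there exists a $\Delta$-diagram $\delta$ such that $\delta(\kappa)>\delta(t_i[\kappa])$ for each $i\in\{1,\dots,n\}$.
   Context: Time warps: join-preserving maps $f\colon\omega^+\to\omega^+$, $\omega^+=\omega\cup\{\omega\}$, ordered pointwise. $\mathbf{W}=\langle W,\wedge,\vee,\circ,{}^\star,\mathrm{id}\rangle$: pointwise meet/join, composition, identity, and $f^\star$ = largest time warp $h$ with $f\circ h\le p$, where $p(m)=\bigvee\{k\in\omega\mid k<m\}$. Terms are built from variables with $\wedge,\vee,\cdot,{}',1$ (interpreted as $\wedge,\vee,\circ,{}^\star,\mathrm{id}$); basic terms use only variables, $\cdot,{}',1$. Samples (formal expressions) are given by the grammar $\alpha::=\kappa\mid t[\alpha]\mid \mathrm{suc}(\alpha)\mid\mathrm{last}(t)$ with $\kappa$ from a countably infinite set of time variables and $t$ a basic term. Let $\leadsto$ be the relation on samples with $t[\alpha]\leadsto\alpha$, $\mathrm{suc}(\alpha)\leadsto\alpha$, $t[\alpha]\leadsto t[\mathrm{last}(t)]$, $(tu)[\alpha]\leadsto t[u[\alpha]]$, $t'[\alpha]\leadsto t[t'[\alpha]]$, $t'[\alpha]\leadsto t[\mathrm{suc}(t'[\alpha])]$. The saturation of a sample set $\Delta_0$ is the set of samples $\beta$ with $\alpha\leadsto^*\beta$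 for some $\alpha\in\Delta_0$ ($\leadsto^*$ reflexive-transitive closure); $\Delta$ is saturated if closed under $\leadsto$. Let $S(n)=n+1$ for $n\in\omega$, $S(\omega)=\omega$. For a saturated $\Delta$, a $\Delta$-diagram is a map $\delta\colon\Delta\to\omega^+$ such that, whenever the samples mentioned belong to $\Delta$: (1) $\delta(\alpha)\le\delta(\beta)\Rightarrow\delta(t[\alpha])\le\delta(t[\beta])$; (2) $\delta(\alpha)=0\Rightarrow\delta(t[\alpha])=0$; (3) $\delta(\mathrm{suc}(\alpha))=S(\delta(\alpha))$; (4) for $t[\alpha]\in\Delta$: $\delta(\mathrm{last}(t))\le\delta(\alpha)\iff\delta(t[\mathrm{last}(t)])=\delta(t[\alpha])$; (5) $\delta(\mathrm{last}(t))=\omega\Rightarrow\delta(t[\mathrm{last}(t)])=\omega$; (6) $\delta(1[\alpha])=\delta(\alpha)$; (7) $\delta(\mathrm{last}(1))=\omega$; (8) $\delta((tu)[\alpha])=\delta(t[u[\alpha]])$; (9) $\delta(\mathrm{last}(tu))=\omega\Rightarrow\delta(\mathrm{last}(t))=\delta(\mathrm{last}(u))=\omega$; (10) for $t'[\alpha]\in\Delta$: $0<\delta(\alpha)<\omega\Rightarrow\delta(t[t'[\alpha]])<\delta(\alpha)$; (11) for $t'[\alpha]\in\Delta$: $\delta(t'[\alpha])<\omega\Rightarrow\delta(\alpha)\le\delta(t[\mathrm{suc}(t'[\alpha])])$; (12) $\delta(\mathrm{last}(t'))=\omega\Rightarrow\delta(\mathrm{last}(t))=\omega$. *)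

From Stdlib Require Import List Relations ClassicalEpsilon.
Import ListNotations.

Inductive onat : Type := fin (n : nat) | omega.

Definition ole (x y : onat) : Prop :=
  match x, y with
  | _, omega => True
  | fin m, fin n => m <= n
  | omega, fin _ => False
  end.

Definition olt (x y : onat) : Prop := ole x y /\ x <> y.

Definition omin (x y : onat) : onat :=
  match x, y with
  | fin m, fin n => fin (Nat.min m n)
  | omega, y => y
  | x, omega => x
  end.

Definition omax (x y : onat) : onat :=
  match x, y with
  | fin m, fin n => fin (Nat.max m n)
  | _, _ => omega
  end.

Definition is_lub (S : onat -> Prop) (x : onat) : Prop :=
  (forall s, S s -> ole s x) /\ (forall y, (forall s, S s -> ole s y) -> ole x y).

Definition is_tw (f : onat -> onat) : Prop :=
  forall (S : onat -> Prop) (x : onat),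
    is_lub S x -> is_lub (fun y => exists s, S s /\ y = f s) (f x).

Definition fle (f g : onat -> onat) : Prop := forall m, ole (f m) (g m).

(** p(m) = \/ { k in omega | k < m } (written out) *)
Definition pw (m : onat) : onat :=
  match m with
  | fin 0 => fin 0
  | fin (S n) => fin n
  | omega => omega
  end.

Definition is_star (f h : onat -> onat) : Prop :=
  is_tw h /\ fle (fun m => f (h m)) pw /\
  (forall h', is_tw h' -> fle (fun m => f (h' m)) pw -> fle h' h).

Definition star (f : onat -> onat) : onat -> onat :=
  epsilon (inhabits (fun m : onat => m)) (fun h => is_star f h).

Inductive term : Type :=
| TVar (i : nat)
| TMeet (t u : term)
| TJoin (t u : term)
| TMul (t u : term)
| TStar (t : term)
| TOne.

Inductive basic : term -> Prop :=
| basic_var i : basic (TVar i)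
| basic_mul t u : basic t -> basic u -> basic (TMul t u)
| basic_star t : basic t -> basic (TStar t)
| basic_one : basic TOne.

Fixpoint eval (v : nat -> onat -> onat) (t : term) : onat -> onat :=
  match t with
  | TVar i => v i
  | TMeet t u => fun m => omin (eval v t m) (eval v u m)
  | TJoin t u => fun m => omax (eval v t m) (eval v u m)
  | TMul t u => fun m => eval v t (eval v u m)
  | TStar t => star (eval v t)
  | TOne => fun m => m
  end.

Definition W_models_le (s t : term) : Prop :=
  forall v : nat -> onat -> onat, (forall i, is_tw (v i)) ->
    fle (eval v s) (eval v t).

Fixpoint join_list (t1 : term) (ts : list term) : term :=
  match ts with
  | [] => t1
  | t2 :: ts' => TJoin t1 (join_list t2 ts')
  end.

Inductive sample : Type :=
| SVar (k : nat)
| SApp (t : term) (a : sample)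
| SSuc (a : sample)
| SLast (t : term).

Inductive step : sample -> sample -> Prop :=
| st_app t a : step (SApp t a) a
| st_suc a : step (SSuc a) a
| st_last t a : step (SApp t a) (SApp t (SLast t))
| st_mul t u a : step (SApp (TMul t u) a) (SApp t (SApp u a))
| st_star1 t a : step (SApp (TStar t) a) (SApp t (SApp (TStar t) a))
| st_star2 t a : step (SApp (TStar t) a) (SApp t (SSuc (SApp (TStar t) a))).

Definition saturation (D0 : sample -> Prop) (b : sample) : Prop :=
  exists a, D0 a /\ clos_refl_trans sample step a b.

Definition Ssucc (x : onat) : onat :=
  match x with fin n => fin (S n) | omega => omega end.

Definition is_diagram (D : sample -> Prop) (d : sample -> onat) : Prop :=
  (forall t a b, D a -> D b -> D (SApp t a) -> D (SApp t b) ->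
     ole (d a) (d b) -> ole (d (SApp t a)) (d (SApp t b))) /\
  (forall t a, D a -> D (SApp t a) -> d a = fin 0 -> d (SApp t a) = fin 0) /\
  (forall a, D a -> D (SSuc a) -> d (SSuc a) = Ssucc (d a)) /\
  (forall t a, D (SApp t a) -> D a -> D (SLast t) -> D (SApp t (SLast t)) ->
     (ole (d (SLast t)) (d a) <-> d (SApp t (SLast t)) = d (SApp t a))) /\
  (forall t, D (SLast t) -> D (SApp t (SLast t)) ->
     d (SLast t) = omega -> d (SApp t (SLast t)) = omega) /\
  (forall a, D (SApp TOne a) -> D a -> d (SApp TOne a) = d a) /\
  (D (SLast TOne) -> d (SLast TOne) = omega) /\
  (forall t u a, D (SApp (TMul t u) a) -> D (SApp t (SApp u a)) ->
     d (SApp (TMul t u) a) = d (SApp t (SApp u a))) /\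
  (forall t u, D (SLast (TMul t u)) -> D (SLast t) -> D (SLast u) ->
     d (SLast (TMul t u)) = omega -> d (SLast t) = omega /\ d (SLast u) = omega) /\
  (forall t a, D (SApp (TStar t) a) -> D a -> D (SApp t (SApp (TStar t) a)) ->
     olt (fin 0) (d a) -> olt (d a) omega ->
     olt (d (SApp t (SApp (TStar t) a))) (d a)) /\
  (forall t a, D (SApp (TStar t) a) -> D a ->
     D (SApp t (SSuc (SApp (TStar t) a))) ->
     olt (d (SApp (TStar t) a)) omega ->
     ole (d a) (d (SApp t (SSuc (SApp (TStar t) a))))) /\
  (forall t, D (SLast (TStar t)) -> D (SLast t) ->
     d (SLast (TStar t)) = omega -> d (SLast t) = omega).

From Stdlib Require Import List Relations Classical ClassicalEpsilon Lia Arith.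
Import ListNotations.

(* A counter-model [v], [m] of [1 <= t1 \/ ... \/ tn] yields a diagram by reading every sample
   under [v]: [kappa] as [m], [t[a]] as the value of [t], [suc] as successor and [last t] as the
   least argument at which [t] reaches its value at [omega]; conditions (10) and (11) express the
   adjunction [f k < m <-> k <= f' m] (for [0 < m < omega]) that characterises the residual.
   Conversely, the saturation of finitely many samples is finite, so a diagram [d] has finitely
   many finite values. Each variable [x] is interpreted by the time warp whose value at [n] is the
   least value [d] prescribes for [x] at arguments [>= n] (capped when [d (last x) = omega], so that
   finite arguments keep finite values); by induction on basic terms every [t] then maps [d a] to
   [d (t[a])], and [m := d kappa] refutes the inequation. *)

Lemma ole_refl a : ole a a.
Proof. destruct a; simpl; auto. Qed.

Lemma ole_trans a b c : ole a b -> ole b c -> ole a c.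
Proof. destruct a, b, c; simpl; intros; auto; try lia; contradiction. Qed.

Lemma ole_antisym a b : ole a b -> ole b a -> a = b.
Proof. destruct a, b; simpl; intros; auto; try contradiction. f_equal; lia. Qed.

Lemma ole_total a b : ole a b \/ ole b a.
Proof. destruct a, b; simpl; auto. lia. Qed.

Lemma olt_not_ole a b : olt a b -> ~ ole b a.
Proof. intros [h1 h2] h3. apply h2, ole_antisym; auto. Qed.

Lemma not_ole_olt a b : ~ ole a b -> olt b a.
Proof.
  intro H. destruct (ole_total a b) as [h|h]; [contradiction|].
  split; auto. intros ->. apply H, ole_refl.
Qed.

Lemma ole_omega a : ole a omega.
Proof. destruct a; simpl; auto. Qed.

Lemma omega_ole a : ole omega a -> a = omega.
Proof. destruct a; simpl; auto; contradiction. Qed.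

Lemma ole_fin0 a : ole (fin 0) a.
Proof. destruct a; simpl; auto; lia. Qed.

Lemma olt_fin_omega n : olt (fin n) omega.
Proof. split; simpl; [auto|discriminate]. Qed.

Lemma olt_fin0_S n : olt (fin 0) (fin (S n)).
Proof. split; simpl; [lia|discriminate]. Qed.

Lemma omax_ge_l a b : ole a (omax a b).
Proof. destruct a, b; simpl; auto; lia. Qed.

Lemma omax_ge_r a b : ole b (omax a b).
Proof. destruct a, b; simpl; auto; lia. Qed.

Lemma omax_cases a b : omax a b = a \/ omax a b = b.
Proof. destruct a, b; simpl; auto. destruct (Nat.max_spec n n0) as [[_ ->]|[_ ->]]; auto. Qed.

Lemma ole_omax_iff a b c : ole a (omax b c) <-> ole a b \/ ole a c.
Proof.
  split.
  - intro H. destruct (omax_cases b c) as [E|E]; rewrite E in H; auto.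
  - intros [H|H]; eapply ole_trans; eauto using omax_ge_l, omax_ge_r.
Qed.

Lemma ole_omin a b c : ole c (omin a b) <-> ole c a /\ ole c b.
Proof. destruct a, b, c; simpl; split; intros; intuition lia. Qed.

Lemma omin_le_l a b : ole (omin a b) a.
Proof. destruct a, b; simpl; auto; lia. Qed.

Lemma omin_le_r a b : ole (omin a b) b.
Proof. destruct a, b; simpl; auto; lia. Qed.

Lemma olt_fin_iff j x : olt (fin j) x <-> ole (fin (S j)) x.
Proof.
  destruct x as [n|]; simpl; split; intros H; auto using olt_fin_omega.
  - destruct H as [H1 H2]; simpl in *. assert (j <> n) by congruence. lia.
  - split; simpl; [lia | intro E; injection E; lia].
Qed.

Lemma olt_fin_S_iff x n : olt x (fin (S n)) <-> ole x (fin n).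
Proof.
  destruct x as [j|]; simpl; split; intros H; try (destruct H; contradiction); auto.
  - destruct H as [H1 H2]; simpl in *. assert (j <> S n) by congruence. lia.
  - split; simpl; [lia | intro E; injection E; lia].
Qed.

Lemma least_nat (P : nat -> Prop) n : P n -> exists m, P m /\ forall j, P j -> m <= j.
Proof.
  intro Hn. destruct (dec_inh_nat_subset_has_unique_least_element P) as [m [Hm _]];
    eauto using classic.
Qed.

Lemma least_onat (S : onat -> Prop) x : S x -> exists m, S m /\ forall y, S y -> ole m y.
Proof.
  intro Hx. destruct (classic (exists n, S (fin n))) as [[n Hn]|N].
  - destruct (least_nat (fun n => S (fin n)) n Hn) as [m [Hm Hl]].
    exists (fin m); split; auto. intros [j|] Hj; simpl; auto.
  - exists x; split; auto. destruct x as [n|]; [exfalso; eauto|].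
    intros [j|] Hj; simpl; auto. exfalso; eauto.
Qed.

Definition is_glb (S : onat -> Prop) (x : onat) : Prop :=
  (forall s, S s -> ole x s) /\ (forall y, (forall s, S s -> ole y s) -> ole y x).

Lemma lub_exists (S : onat -> Prop) : exists x, is_lub S x.
Proof.
  destruct (least_onat (fun y => forall s, S s -> ole s y) omega) as [m [H1 H2]].
  - intros; apply ole_omega.
  - exists m; split; auto.
Qed.

Lemma glb_exists (S : onat -> Prop) : exists x, is_glb S x.
Proof.
  destruct (classic (exists s, S s)) as [[s Hs]|N].
  - destruct (least_onat S s Hs) as [m [H1 H2]]. exists m; split; auto.
  - exists omega; split; [intros s Hs; exfalso; eauto | intros; apply ole_omega].
Qed.

Lemma is_lub_unique S x y : is_lub S x -> is_lub S y -> x = y.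
Proof. intros [a b] [c d]. apply ole_antisym; auto. Qed.

Lemma is_lub_ext (S T : onat -> Prop) x : (forall y, S y <-> T y) -> is_lub S x -> is_lub T x.
Proof.
  intros E [Hub Hleast]; split.
  - intros s Hs; apply Hub, E, Hs.
  - intros y Hy; apply Hleast; intros s Hs; apply Hy, E, Hs.
Qed.

Definition osup (S : onat -> Prop) : onat := epsilon (inhabits omega) (is_lub S).
Definition oinf (S : onat -> Prop) : onat := epsilon (inhabits omega) (is_glb S).

Lemma osup_spec S : is_lub S (osup S).
Proof. unfold osup. apply epsilon_spec, lub_exists. Qed.

Lemma oinf_spec S : is_glb S (oinf S).
Proof. unfold oinf. apply epsilon_spec, glb_exists. Qed.

Lemma osup_ge (S : onat -> Prop) s : S s -> ole s (osup S).
Proof. apply osup_spec. Qed.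

Lemma osup_eq S x : is_lub S x -> osup S = x.
Proof. apply is_lub_unique, osup_spec. Qed.

Lemma lub_fin_attained (A : onat -> Prop) V : is_lub A (fin V) -> (exists s, A s) -> A (fin V).
Proof.
  intros [Hub Hleast] [s Hs]. apply NNPP; intro N.
  destruct V as [|V].
  - replace s with (fin 0) in Hs by (apply ole_antisym; auto using ole_fin0). contradiction.
  - enough (ole (fin (S V)) (fin V)) by (simpl in *; lia).
    apply Hleast. intros [j|] Hj; specialize (Hub _ Hj); simpl in *; [|contradiction].
    destruct (Nat.eq_dec j (S V)); [subst; contradiction | lia].
Qed.

Lemma lub_pair a b : ole a b -> is_lub (fun y => y = a \/ y = b) b.
Proof. intro h; split; [intros s [-> | ->]; auto using ole_refl | intros y Hy; apply Hy; auto]. Qed.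

Lemma lub_empty : is_lub (fun _ => False) (fin 0).
Proof. split; [tauto | intros; apply ole_fin0]. Qed.

Lemma lub_nats : is_lub (fun y => exists n, y = fin n) omega.
Proof.
  split; [intros; apply ole_omega|].
  intros [y|] H; simpl; auto. specialize (H (fin (S y)) (ex_intro _ _ eq_refl)). simpl in H; lia.
Qed.

(** * Time warps *)

Definition monotone (f : onat -> onat) : Prop := forall a b, ole a b -> ole (f a) (f b).

Definition omega_continuous (f : onat -> onat) : Prop :=
  is_lub (fun y => exists n, y = f (fin n)) (f omega).

Section TimeWarp.
Variable f : onat -> onat.
Hypothesis Hf : is_tw f.

Lemma tw_mono : monotone f.
Proof. intros a b h. apply (proj1 (Hf _ _ (lub_pair a b h))). eauto. Qed.

Lemma tw_zero : f (fin 0) = fin 0.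
Proof.
  apply ole_antisym; [|apply ole_fin0].
  apply (proj2 (Hf _ _ lub_empty)). intros s [x [[] _]].
Qed.

Lemma tw_cont : omega_continuous f.
Proof.
  destruct (Hf _ _ lub_nats) as [Hub Hleast]. split.
  - intros s [n ->]. apply Hub; eauto.
  - intros y Hy. apply Hleast. intros s [x [[n ->] ->]]. apply Hy; eauto.
Qed.

Lemma tw_omega_attained V : f omega = fin V -> exists n, f (fin n) = fin V.
Proof.
  intro E. assert (C := tw_cont). unfold omega_continuous in C. rewrite E in C.
  destruct (lub_fin_attained _ _ C) as [n Hn]; [exists (f (fin 0)), 0; reflexivity | eauto].
Qed.

Lemma tw_unbounded n : f omega = omega -> exists j, ole (fin n) (f (fin j)).
Proof.
  intro E. apply NNPP; intro N.
  enough (ole (f omega) (fin n)) by (rewrite E in *; contradiction).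
  apply (proj2 tw_cont). intros s [j ->].
  destruct (ole_total (f (fin j)) (fin n)); auto. exfalso; eauto.
Qed.

End TimeWarp.

Lemma tw_intro f : monotone f -> f (fin 0) = fin 0 -> omega_continuous f -> is_tw f.
Proof.
  intros M Z [C1 C2] S x [L1 L2]. split; [intros y [s [Hs ->]]; apply M, L1, Hs|].
  intros y Hy. destruct x as [n|].
  - destruct (classic (exists s, S s)) as [E|NE].
    + apply Hy. exists (fin n). split; auto. apply lub_fin_attained; [split|]; auto.
    + replace (fin n) with (fin 0); [rewrite Z; apply ole_fin0|].
      apply ole_antisym; [apply ole_fin0|]. apply L2. intros s Hs; exfalso; eauto.
  - destruct (classic (S omega)) as [Hw|Hw]; [apply Hy; eauto|].
    apply C2. intros s [m ->].
    destruct (classic (exists s, S s /\ ole (fin m) s)) as [[s [Hs Hms]]|N].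
    + apply ole_trans with (f s); [apply M, Hms | apply Hy; eauto].
    + enough (ole omega (fin m)) by contradiction.
      apply L2. intros s Hs. destruct (ole_total s (fin m)) as [h|h]; auto.
      exfalso; eauto.
Qed.

Lemma tw_id : is_tw (fun m => m).
Proof.
  intros S x H. eapply is_lub_ext; [|exact H].
  intro y; split; [intros; exists y; auto | intros [s [h ->]]; auto].
Qed.

Lemma tw_comp f g : is_tw f -> is_tw g -> is_tw (fun m => f (g m)).
Proof.
  intros F G S x H. eapply is_lub_ext; [|exact (F _ _ (G _ _ H))].
  intro y; split.
  - intros [s [[s0 [h1 ->]] ->]]; eauto.
  - intros [s0 [h ->]]; eauto.
Qed.

(** * The residual [star] *)

Section Star.
Variable f : onat -> onat.
Hypothesis Hf : is_tw f.

Definition radj (y : onat) : onat := osup (fun k => ole (f k) y).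

Lemma radj_spec y : ole (f (radj y)) y.
Proof. apply (proj2 (Hf _ _ (osup_spec _))). intros s [k [hk ->]]; auto. Qed.

Lemma radj_ge y k : ole (f k) y -> ole k (radj y).
Proof. intro h. exact (osup_ge (fun k => ole (f k) y) k h). Qed.

Lemma radj_mono y1 y2 : ole y1 y2 -> ole (radj y1) (radj y2).
Proof. intro h. apply radj_ge. eapply ole_trans; [apply radj_spec | exact h]. Qed.

Definition star_fin (n : nat) : onat :=
  match n with 0 => fin 0 | S n => radj (fin n) end.

Definition star_expl (m : onat) : onat :=
  match m with fin n => star_fin n | omega => osup (fun y => exists n, y = star_fin n) end.

Lemma star_expl_is_star : is_star f star_expl.
Proof.
  assert (M : monotone star_expl).
  { intros [[|a]|] [[|b]|] h; cbn [star_expl star_fin];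
      first [ apply ole_fin0 | apply ole_refl | apply radj_mono; simpl in *; lia
            | apply (osup_ge (fun y => exists n, y = star_fin n)); exists (S a); reflexivity
            | simpl in h; (lia || contradiction) ]. }
  split; [|split].
  - apply tw_intro; auto. exact (osup_spec _).
  - intros [[|n]|]; simpl; [rewrite (tw_zero _ Hf); apply ole_refl | apply radj_spec | apply ole_omega].
  - intros h Hh Hfh.
    assert (Hfin : forall n, ole (h (fin n)) (star_fin n)).
    { intros [|n]; simpl; [rewrite (tw_zero _ Hh); apply ole_refl | apply radj_ge, (Hfh (fin (S n)))]. }
    intros [n|]; [apply Hfin|]. apply (proj2 (tw_cont _ Hh)). intros s [n ->].
    eapply ole_trans; [apply Hfin | apply osup_ge; eauto].
Qed.

Lemma star_is_star : is_star f (star f).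
Proof. unfold star. apply epsilon_spec. exists star_expl. apply star_expl_is_star. Qed.

Lemma star_expl_eq m : star f m = star_expl m.
Proof.
  destruct star_is_star as [T [L Max]]. destruct star_expl_is_star as [T' [L' Max']].
  apply ole_antisym; [apply Max' | apply Max]; auto.
Qed.

Lemma star_tw : is_tw (star f).
Proof. apply star_is_star. Qed.

Lemma star_le_pw m : ole (f (star f m)) (pw m).
Proof. apply star_is_star. Qed.

Lemma star_ge k m : olt (f k) m -> ole k (star f m).
Proof.
  intro H. rewrite star_expl_eq. destruct m as [[|n]|]; simpl.
  - exfalso. destruct H as [H1 H2]. apply H2, ole_antisym; auto using ole_fin0.
  - apply radj_ge, olt_fin_S_iff, H.
  - destruct (f k) as [V|] eqn:E; [|destruct H; contradiction].
    apply ole_trans with (star_fin (S V)); [apply radj_ge; rewrite E; apply ole_refl | apply osup_ge; eauto].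
Qed.

Lemma star_le_of_ge j m : ole m (f (fin (S j))) -> ole (star f m) (fin j).
Proof.
  assert (Hfin : forall n, ole (fin n) (f (fin (S j))) -> ole (star f (fin n)) (fin j)).
  { intros [|n] Hn; [rewrite (tw_zero _ star_tw); simpl; lia|].
    apply NNPP; intro N. apply not_ole_olt, olt_fin_iff in N.
    assert (X := ole_trans _ _ _ Hn (ole_trans _ _ _ (tw_mono _ Hf _ _ N) (star_le_pw (fin (S n))))).
    simpl in X; lia. }
  destruct m as [n|]; [apply Hfin|]. intro E. apply omega_ole in E.
  apply (proj2 (tw_cont _ star_tw)). intros s [n ->]. apply Hfin. rewrite E. apply ole_omega.
Qed.

Lemma star_lt_arg m : olt (fin 0) m -> olt m omega -> olt (f (star f m)) m.
Proof.
  intros H0 Hw. destruct m as [[|n]|]; [destruct H0 as [_ []]; reflexivity| |destruct Hw as [_ []]; reflexivity].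
  apply olt_fin_S_iff, (star_le_pw (fin (S n))).
Qed.

Lemma star_succ_ge m : olt (star f m) omega -> ole m (f (Ssucc (star f m))).
Proof.
  intro H. destruct (star f m) as [j|] eqn:E; [|destruct H as [_ []]; reflexivity].
  simpl. apply NNPP; intro N. apply not_ole_olt, star_ge in N.
  rewrite E in N; simpl in N; lia.
Qed.

Lemma star_unique m k : olt (f k) m -> (forall j, k = fin j -> ole m (f (fin (S j)))) -> star f m = k.
Proof.
  intros Hlt Hge. apply ole_antisym; [|apply star_ge, Hlt].
  destruct k as [j|]; [apply star_le_of_ge, Hge; reflexivity | apply ole_omega].
Qed.

Lemma star_omega_of_fin : (forall n, f (fin n) <> omega) -> star f omega = omega.
Proof.
  intro H. destruct (star f omega) as [j|] eqn:E; auto.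
  enough (ole (fin (S j)) (fin j)) by (simpl in *; lia).
  rewrite <- E. apply star_ge. specialize (H (S j)). destruct (f (fin (S j))); [apply olt_fin_omega | contradiction].
Qed.

End Star.

(** * The sample [last t] *)

Definition is_last (f : onat -> onat) (L : onat) : Prop :=
  f L = f omega /\ forall m, f m = f omega -> ole L m.

Definition lastf (f : onat -> onat) : onat := epsilon (inhabits omega) (is_last f).

Lemma lastf_spec f : is_last f (lastf f).
Proof.
  unfold lastf. apply epsilon_spec.
  destruct (least_onat (fun m => f m = f omega) omega eq_refl) as [m Hm]. eauto.
Qed.

Lemma lastf_le_iff f a : monotone f -> ole (lastf f) a <-> f (lastf f) = f a.
Proof.
  intro M. destruct (lastf_spec f) as [E Hle]. split; intro H.
  - apply ole_antisym; [apply M, H|]. rewrite E. apply M, ole_omega.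
  - apply Hle. congruence.
Qed.

Lemma lastf_omega_iff f : lastf f = omega <-> forall n, f (fin n) <> f omega.
Proof.
  destruct (lastf_spec f) as [E Hle]. split.
  - intros L n e. specialize (Hle _ e). rewrite L in Hle. contradiction.
  - intros H. destruct (lastf f) as [n|]; [exfalso; apply (H n), E | reflexivity].
Qed.

Lemma lastf_omega_value f : is_tw f -> lastf f = omega -> f omega = omega.
Proof.
  intros F L. rewrite lastf_omega_iff in L. destruct (f omega) as [V|] eqn:E; auto.
  destruct (tw_omega_attained f F V E) as [n Hn]. exfalso. apply (L n). congruence.
Qed.

Lemma lastf_id : lastf (fun m => m) = omega.
Proof. apply lastf_omega_iff. discriminate. Qed.

Lemma lastf_comp_omega f g : is_tw f -> is_tw g ->
  lastf (fun m => f (g m)) = omega -> lastf f = omega /\ lastf g = omega.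
Proof.
  intros F G L.
  assert (Hfg := lastf_omega_value _ (tw_comp _ _ F G) L). simpl in Hfg.
  rewrite lastf_omega_iff in L.
  assert (Lg : lastf g = omega) by (apply lastf_omega_iff; intros n e; apply (L n); congruence).
  split; auto.
  assert (Hg := lastf_omega_value _ G Lg). rewrite Hg in Hfg.
  apply lastf_omega_iff. intros n e. rewrite Hfg in e.
  destruct (tw_unbounded g G n Hg) as [j Hj].
  apply (L j). rewrite Hg, Hfg. apply omega_ole. rewrite <- e. apply (tw_mono _ F _ _ Hj).
Qed.

Lemma lastf_star_omega f : is_tw f -> lastf (star f) = omega -> lastf f = omega.
Proof.
  intros F L. rewrite lastf_omega_iff in L. apply lastf_omega_iff. intros l El.
  destruct (f omega) as [V|] eqn:Ew.
  -     assert (Hw : star f (fin (S V)) = omega).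
    { apply omega_ole, (star_ge f F omega). rewrite Ew. apply olt_fin_iff, ole_refl. }
    apply (L (S V)). apply ole_antisym; [apply (tw_mono _ (star_tw f F)), ole_omega|].
    rewrite Hw. apply ole_omega.
  -     assert (Hb : forall n, ole (star f (fin n)) (fin l)).
    { intros n. apply NNPP; intro N. apply not_ole_olt in N.
      assert (X := ole_trans _ _ _ (tw_mono _ F _ _ (proj1 N)) (star_le_pw f F (fin n))).
      rewrite El in X. destruct n; simpl in X; contradiction. }
    assert (Hw : ole (star f omega) (fin l)).
    { apply (proj2 (tw_cont _ (star_tw f F))). intros s [n ->]; auto. }
    destruct (star f omega) as [V|] eqn:E; [|contradiction].
    destruct (tw_omega_attained _ (star_tw f F) V E) as [n Hn].
    apply (L n). congruence.
Qed.

Lemma eval_join_list_ge v m t1 ts :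
  ole m (eval v (join_list t1 ts) m) <-> Exists (fun t => ole m (eval v t m)) (t1 :: ts).
Proof.
  revert t1; induction ts as [|t2 ts IH]; intro t1; simpl; rewrite Exists_cons.
  - rewrite Exists_nil. tauto.
  - rewrite ole_omax_iff, IH. reflexivity.
Qed.

Lemma not_models_join_iff t1 ts :
  ~ W_models_le TOne (join_list t1 ts) <->
  exists v m, (forall i, is_tw (v i)) /\ Forall (fun t => olt (eval v t m) m) (t1 :: ts).
Proof.
  unfold W_models_le, fle. simpl. split.
  - intro H. apply not_all_ex_not in H as [v H]. apply imply_to_and in H as [V H].
    apply not_all_ex_not in H as [m H]. exists v, m. split; auto.
    rewrite eval_join_list_ge, <- Forall_Exists_neg in H.
    eapply Forall_impl; [|exact H]. intros t. apply not_ole_olt.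
  - intros [v [m [V H]]] W. specialize (W v V m).
    rewrite eval_join_list_ge in W. revert W. apply Forall_Exists_neg.
    eapply Forall_impl; [|exact H]. intros t. apply olt_not_ole.
Qed.

(** * Soundness *)

Lemma eval_tw v t : (forall i, is_tw (v i)) -> basic t -> is_tw (eval v t).
Proof.
  intros V B; induction B; simpl; auto using tw_comp, star_tw, tw_id.
Qed.

Fixpoint basic_sample (s : sample) : Prop :=
  match s with
  | SVar _ => True
  | SApp t a => basic t /\ basic_sample a
  | SSuc a => basic_sample a
  | SLast t => basic t
  end.

Lemma step_basic_sample a b : step a b -> basic_sample a -> basic_sample b.
Proof.
  intros []; simpl; intuition; match goal with H : basic _ |- _ => inversion H; subst; auto end.
Qed.

Lemma saturation_basic_sample (D0 : sample -> Prop) b :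
  (forall a, D0 a -> basic_sample a) -> saturation D0 b -> basic_sample b.
Proof.
  intros H [a [Ha R]]. specialize (H a Ha). clear Ha.
  induction R; eauto using step_basic_sample.
Qed.

Fixpoint sem (v : nat -> onat -> onat) (m : onat) (s : sample) : onat :=
  match s with
  | SVar _ => m
  | SApp t a => eval v t (sem v m a)
  | SSuc a => Ssucc (sem v m a)
  | SLast t => lastf (eval v t)
  end.

Lemma sem_diagram v m (D : sample -> Prop) :
  (forall i, is_tw (v i)) -> (forall s, D s -> basic_sample s) -> is_diagram D (sem v m).
Proof.
  intros V B.
  assert (TW : forall t, basic t -> is_tw (eval v t)) by (intros; apply eval_tw; auto).
  assert (Bapp : forall t a, D (SApp t a) -> basic t) by (intros t a H; apply (B _ H)).
  assert (Blast : forall t, D (SLast t) -> basic t) by (intros t H; apply (B _ H)).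
  unfold is_diagram; repeat match goal with |- _ /\ _ => split end; simpl.
  - intros t a b _ _ H _. apply tw_mono, TW, (Bapp _ _ H).
  - intros t a _ H ->. apply tw_zero, TW, (Bapp _ _ H).
  - reflexivity.
  - intros t a H _ _ _. apply lastf_le_iff, tw_mono, TW, (Bapp _ _ H).
  - intros t H _ E. rewrite E. apply lastf_omega_value; [apply TW, Blast, H | exact E].
  - reflexivity.
  - intros _. apply lastf_id.
  - reflexivity.
  - intros t u H _ _. assert (Bt := Blast _ H). inversion Bt. apply lastf_comp_omega; auto.
  - intros t a H _ _. assert (Bt := Bapp _ _ H). inversion Bt. apply star_lt_arg; auto.
  - intros t a H _ _. assert (Bt := Bapp _ _ H). inversion Bt. apply star_succ_ge; auto.
  - intros t H _. assert (Bt := Blast _ H). inversion Bt. apply lastf_star_omega; auto.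
Qed.

Lemma diagram_of_countermodel (l : list term) k v m :
  Forall basic l -> (forall i, is_tw (v i)) ->
  Forall (fun t => olt (eval v t m) m) l ->
  exists d : sample -> onat,
    is_diagram (saturation (fun a => exists t, In t l /\ a = SApp t (SVar k))) d /\
    Forall (fun t => olt (d (SApp t (SVar k))) (d (SVar k))) l.
Proof.
  intros Hb V Hlt. exists (sem v m). split; [apply sem_diagram; auto|exact Hlt].
  intros s. apply saturation_basic_sample. intros a [t [Ht ->]].
  split; [exact (proj1 (Forall_forall _ _) Hb t Ht) | exact I].
Qed.

(** * Saturations of finite sets are finite *)

(* [reach_app t a] contains every sample reachable from [t[a]] without passing through [a] *)
Fixpoint reach_core (t : term) (a : sample) : list sample :=
  let reach_app u b := reach_core u b ++ reach_core u (SLast u) ++ [SLast u] in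
  match t with
  | TMul u w => SApp (TMul u w) a :: reach_app u (SApp w a) ++ reach_app w a
  | TStar u => SApp (TStar u) a :: SSuc (SApp (TStar u) a) ::
      reach_app u (SApp (TStar u) a) ++ reach_app u (SSuc (SApp (TStar u) a))
  | _ => [SApp t a]
  end.

Definition reach_app (t : term) (a : sample) : list sample :=
  reach_core t a ++ reach_core t (SLast t) ++ [SLast t].

Lemma reach_core_head t a : In (SApp t a) (reach_core t a).
Proof. destruct t; simpl; auto. Qed.

Ltac prove_in :=
  match goal with
  | |- In (SApp ?t ?a) (reach_core ?t ?a) => apply reach_core_head
  | H : In ?x ?l |- In ?x ?l => exact H
  | |- In _ (_ ++ _) => apply in_or_app; first [left; prove_in | right; prove_in]
  | |- In _ (_ :: _) => first [apply in_eq | apply in_cons; prove_in]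
  end.

Ltac solve_in :=
  repeat match goal with
         | H : In _ (_ ++ _) |- _ => apply in_app_or in H as [H|H]
         | H : In _ [_] |- _ => destruct H as [<-|[]]
         end;
  prove_in.

Lemma reach_app_step_of_core t :
  (forall a b c, In b (reach_core t a) -> step b c -> In c (reach_app t a) \/ c = a) ->
  forall a b c, In b (reach_app t a) -> step b c -> In c (reach_app t a) \/ c = a.
Proof.
  intros H a b c Hb Hs. apply in_app_or in Hb as [Hb|Hb]; [exact (H _ _ _ Hb Hs)|].
  apply in_app_or in Hb as [Hb|[<-|[]]]; [|inversion Hs].
  left. unfold reach_app in *. destruct (H _ _ _ Hb Hs) as [Hc| ->]; solve_in.
Qed.

Lemma reach_core_step t a b c : In b (reach_core t a) -> step b c -> In c (reach_app t a) \/ c = a.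
Proof.
  revert a b c. induction t as [| | |u IHu w IHw|u IHu|]; intros a b c Hb Hs; cbn [reach_core] in Hb;
    unfold reach_app; cbn [reach_core].
  all: try (destruct Hb as [<-|[]]; inversion Hs; subst; solve [left; solve_in | right; reflexivity]).
  - destruct Hb as [<-|Hb]; [inversion Hs; subst; solve [left; solve_in | right; reflexivity]|].
    apply in_app_or in Hb as [Hb|Hb].
    + destruct (reach_app_step_of_core u IHu _ _ _ Hb Hs) as [Hc| ->]; left; unfold reach_app in *; solve_in.
    + destruct (reach_app_step_of_core w IHw _ _ _ Hb Hs) as [Hc| ->]; [left; unfold reach_app in *; solve_in | auto].
  - destruct Hb as [<-|[<-|Hb]]; [inversion Hs; subst; solve [left; solve_in | right; reflexivity] ..|].
    apply in_app_or in Hb as [Hb|Hb];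
      destruct (reach_app_step_of_core u IHu _ _ _ Hb Hs) as [Hc| ->]; left; unfold reach_app in *; solve_in.
Qed.

Lemma saturation_step (D0 : sample -> Prop) a b : saturation D0 a -> step a b -> saturation D0 b.
Proof. intros [c [Hc R]] S. exists c. split; auto. eapply rt_trans; eauto using rt_step. Qed.

Lemma reach_var_closed t k x y : clos_refl_trans_1n sample step x y ->
  In x (SVar k :: reach_app t (SVar k)) -> In y (SVar k :: reach_app t (SVar k)).
Proof.
  induction 1 as [|x y z Sxy R IH]; auto. intros Hx. apply IH.
  destruct Hx as [<-|Hx]; [inversion Sxy|].
  destruct (reach_app_step_of_core t (reach_core_step t) _ _ _ Hx Sxy) as [Hy| ->]; simpl; auto.
Qed.

Lemma saturation_in_reach (l : list term) k b :
  saturation (fun a => exists t, In t l /\ a = SApp t (SVar k)) b ->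
  In b (SVar k :: flat_map (fun t => reach_app t (SVar k)) l).
Proof.
  intros [a [[t [Ht ->]] R]].
  assert (Hstart : In (SApp t (SVar k)) (SVar k :: reach_app t (SVar k))) by (unfold reach_app; solve_in).
  destruct (reach_var_closed t k _ _ (clos_rt_rt1n _ _ _ _ R) Hstart) as [<-|Hb].
  - apply in_eq.
  - apply in_cons, in_flat_map. eauto.
Qed.

Lemma finite_values_bounded (d : sample -> onat) (l : list sample) :
  exists N, forall s, In s l -> forall j, d s = fin j -> j <= N.
Proof.
  induction l as [|x l [N IH]]; [exists 0; intros s []|].
  destruct (d x) as [j0|] eqn:E.
  - exists (N + j0). intros s [<-|Hs] j Hj; [rewrite E in Hj; injection Hj; lia|].
    specialize (IH s Hs j Hj); lia.
  - exists N. intros s [<-|Hs] j Hj; [congruence | eauto].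
Qed.

(** * Completeness *)

Section Completeness.
Variable D : sample -> Prop.
Variable d : sample -> onat.
Hypothesis D_step : forall a b, D a -> step a b -> D b.
Variable N : nat.
Hypothesis d_bounded : forall s, D s -> forall j, d s = fin j -> j <= N.
Hypothesis d_mono : forall t a b, D a -> D b -> D (SApp t a) -> D (SApp t b) ->
  ole (d a) (d b) -> ole (d (SApp t a)) (d (SApp t b)).
Hypothesis d_zero : forall t a, D a -> D (SApp t a) -> d a = fin 0 -> d (SApp t a) = fin 0.
Hypothesis d_suc : forall a, D a -> D (SSuc a) -> d (SSuc a) = Ssucc (d a).
Hypothesis d_last : forall t a, D (SApp t a) -> D a -> D (SLast t) -> D (SApp t (SLast t)) ->
  (ole (d (SLast t)) (d a) <-> d (SApp t (SLast t)) = d (SApp t a)).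
Hypothesis d_last_omega : forall t, D (SLast t) -> D (SApp t (SLast t)) ->
  d (SLast t) = omega -> d (SApp t (SLast t)) = omega.
Hypothesis d_one : forall a, D (SApp TOne a) -> D a -> d (SApp TOne a) = d a.
Hypothesis d_mul : forall t u a, D (SApp (TMul t u) a) -> D (SApp t (SApp u a)) ->
  d (SApp (TMul t u) a) = d (SApp t (SApp u a)).
Hypothesis d_last_mul : forall t u, D (SLast (TMul t u)) -> D (SLast t) -> D (SLast u) ->
  d (SLast (TMul t u)) = omega -> d (SLast t) = omega /\ d (SLast u) = omega.
Hypothesis d_star_lt : forall t a, D (SApp (TStar t) a) -> D a -> D (SApp t (SApp (TStar t) a)) ->
  olt (fin 0) (d a) -> olt (d a) omega -> olt (d (SApp t (SApp (TStar t) a))) (d a).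
Hypothesis d_star_succ : forall t a, D (SApp (TStar t) a) -> D a ->
  D (SApp t (SSuc (SApp (TStar t) a))) ->
  olt (d (SApp (TStar t) a)) omega -> ole (d a) (d (SApp t (SSuc (SApp (TStar t) a)))).
Hypothesis d_last_star : forall t, D (SLast (TStar t)) -> D (SLast t) ->
  d (SLast (TStar t)) = omega -> d (SLast t) = omega.

Lemma D_arg t a : D (SApp t a) -> D a.
Proof. intro H; eapply D_step; [exact H | constructor]. Qed.

Lemma D_app_last t a : D (SApp t a) -> D (SApp t (SLast t)).
Proof. intro H; eapply D_step; [exact H | constructor]. Qed.

Lemma D_last t a : D (SApp t a) -> D (SLast t).
Proof. intro H; eapply D_arg, D_app_last, H. Qed.

Lemma d_app_fin_of_last_omega t a j :
  D (SApp t a) -> d (SLast t) = omega -> d a = fin j -> d (SApp t a) <> omega.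
Proof.
  intros H L E e. assert (X := d_last t a H (D_arg _ _ H) (D_last _ _ H) (D_app_last _ _ H)).
  rewrite L, E, (d_last_omega t (D_last _ _ H) (D_app_last _ _ H) L), e in X.
  apply X. reflexivity.
Qed.

Lemma d_app_omega_of_last_omega t a :
  D (SApp t a) -> d (SLast t) = omega -> d a = omega -> d (SApp t a) = omega.
Proof.
  intros H L E. assert (X := d_last t a H (D_arg _ _ H) (D_last _ _ H) (D_app_last _ _ H)).
  rewrite L, E, (d_last_omega t (D_last _ _ H) (D_app_last _ _ H) L) in X.
  symmetry. apply X, ole_refl.
Qed.

Section VariableWarp.
Variable i : nat.
Let x : term := TVar i.

Definition val_above (n : nat) : onat :=
  oinf (fun y => exists b, D (SApp x b) /\ ole (fin n) (d b) /\ y = d (SApp x b)).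

Lemma val_above_le n b : D (SApp x b) -> ole (fin n) (d b) -> ole (val_above n) (d (SApp x b)).
Proof. intros. apply (proj1 (oinf_spec _)). eauto. Qed.

Lemma val_above_ge n y :
  (forall b, D (SApp x b) -> ole (fin n) (d b) -> ole y (d (SApp x b))) -> ole y (val_above n).
Proof. intros H. apply (proj2 (oinf_spec _)). intros s [b [h1 [h2 ->]]]; auto. Qed.

Lemma val_above_mono n m : n <= m -> ole (val_above n) (val_above m).
Proof.
  intros h. apply val_above_ge. intros b Hb hb. apply val_above_le; auto.
  eapply ole_trans; [|exact hb]. simpl; lia.
Qed.

Lemma val_above_at a n : D (SApp x a) -> d a = fin n -> val_above n = d (SApp x a).
Proof.
  intros Ha E. apply ole_antisym.
  - apply val_above_le; auto. rewrite E; apply ole_refl.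
  - apply val_above_ge. intros b Hb hb. apply d_mono; eauto using D_arg. rewrite E; auto.
Qed.

(* if the diagram says that [x] never reaches its final value, the finite values are capped so
   that they stay finite; the cap [N + n] is still unbounded and leaves the prescribed values alone *)
Definition var_fin (n : nat) : onat :=
  match n with
  | 0 => fin 0
  | S n => if excluded_middle_informative (d (SLast x) = omega)
           then omin (val_above (S n)) (fin (N + S n)) else val_above (S n)
  end.

Definition var_warp (m : onat) : onat :=
  match m with fin n => var_fin n | omega => osup (fun y => exists n, y = var_fin n) end.

Lemma var_fin_mono n m : n <= m -> ole (var_fin n) (var_fin m).
Proof.
  intros h. destruct n as [|n]; [apply ole_fin0|]. destruct m as [|m]; [lia|]. simpl.
  destruct excluded_middle_informative.
  - apply ole_omin; split.
    + eapply ole_trans; [apply omin_le_l | apply val_above_mono; lia].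
    + eapply ole_trans; [apply omin_le_r | simpl; lia].
  - apply val_above_mono; lia.
Qed.

Lemma var_warp_tw : is_tw var_warp.
Proof.
  apply tw_intro; [| reflexivity | exact (osup_spec _)].
  intros [a|] [b|] h; simpl in *.
  - apply var_fin_mono; auto.
  - apply osup_ge. eauto.
  - contradiction.
  - apply ole_refl.
Qed.

Lemma var_warp_fin : d (SLast x) = omega -> forall n, var_warp (fin n) <> omega.
Proof.
  intros L [|n]; simpl; [discriminate|]. destruct excluded_middle_informative; [|contradiction].
  destruct (val_above (S n)); simpl; discriminate.
Qed.

Lemma var_fin_sample a n : D (SApp x a) -> d a = fin n -> var_fin n = d (SApp x a).
Proof.
  intros Ha E. destruct n as [|n]; [symmetry; apply d_zero; eauto using D_arg|].
  simpl. rewrite (val_above_at a (S n) Ha E). destruct excluded_middle_informative as [L|L]; auto.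
  assert (F := d_app_fin_of_last_omega x a (S n) Ha L E).
  destruct (d (SApp x a)) as [V|] eqn:EV; [|contradiction].
  assert (V <= N) by (eapply d_bounded; eauto). simpl. f_equal. lia.
Qed.

Lemma var_fin_lub_last_fin a l : D (SApp x a) -> d a = omega -> d (SLast x) = fin l ->
  is_lub (fun y => exists n, y = var_fin n) (d (SApp x a)).
Proof.
  intros Ha E L.
  assert (HV : forall b, D (SApp x b) -> ole (fin l) (d b) -> d (SApp x b) = d (SApp x a)).
  { intros b Hb hb. transitivity (d (SApp x (SLast x))); [symmetry|];
      apply d_last; eauto using D_arg, D_last, D_app_last; rewrite L; [exact hb | rewrite E; exact I]. }
  split.
  - intros s [[|m] ->]; [apply ole_fin0|]. simpl. destruct excluded_middle_informative; [congruence|].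
    apply val_above_le; auto. rewrite E; apply ole_omega.
  - intros y Hy. eapply ole_trans; [|exact (Hy (var_fin (S l)) (ex_intro _ _ eq_refl))].
    simpl. destruct excluded_middle_informative; [congruence|].
    apply val_above_ge. intros b Hb hb. rewrite (HV b Hb); [apply ole_refl|].
    eapply ole_trans; [|exact hb]. simpl; lia.
Qed.

Lemma var_fin_lub_last_omega :
  d (SLast x) = omega -> is_lub (fun y => exists n, y = var_fin n) omega.
Proof.
  intros L. split; [intros; apply ole_omega|].
  intros [j|] Hy; [exfalso | apply ole_refl].
  specialize (Hy (var_fin (S (N + j))) (ex_intro _ _ eq_refl)). simpl in Hy.
  destruct excluded_middle_informative as [_|]; [|contradiction].
  (* beyond [N], every argument sampled by the diagram is [omega] *)
  assert (val_above (S (N + j)) = omega) as E.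
  { apply omega_ole, val_above_ge. intros b Hb hb. destruct (d b) as [jb|] eqn:Eb.
    - exfalso. assert (jb <= N) by (eapply d_bounded; [exact (D_arg _ _ Hb) | exact Eb]).
      simpl in hb; lia.
    - rewrite (d_app_omega_of_last_omega x b Hb L Eb). apply ole_refl. }
  rewrite E in Hy. simpl in Hy. lia.
Qed.

Lemma var_warp_sample a : D (SApp x a) -> var_warp (d a) = d (SApp x a).
Proof.
  intros Ha. destruct (d a) as [n|] eqn:E; [apply (var_fin_sample a n Ha E)|].
  simpl. apply osup_eq. destruct (d (SLast x)) as [l|] eqn:L.
  - apply (var_fin_lub_last_fin a l Ha E L).
  - rewrite (d_app_omega_of_last_omega x a Ha L E). apply var_fin_lub_last_omega, L.
Qed.

End VariableWarp.

Section StarCase.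
Variable u : term.
Variable f : onat -> onat.
Hypothesis f_tw : is_tw f.
Hypothesis f_sample : forall a, D (SApp u a) -> f (d a) = d (SApp u a).
Hypothesis f_fin : forall a, D (SApp u a) -> d (SLast u) = omega -> forall n, f (fin n) <> omega.

Lemma star_arg_omega_fin a : D (SApp (TStar u) a) -> d a = omega ->
  forall n, ole (fin n) (d (SApp (TStar u) a)) -> f (fin n) <> omega.
Proof.
  intros Ha Ea n Hn. set (c := SLast (TStar u)).
  assert (Dc : D (SApp (TStar u) c)) by exact (D_app_last _ _ Ha).
  assert (Duc : D (SApp u (SApp (TStar u) c))) by (eapply D_step; [exact Dc | constructor]).
  assert (Eq : d (SApp (TStar u) c) = d (SApp (TStar u) a)).
  { apply d_last; eauto using D_arg, D_last. rewrite Ea. apply ole_omega. }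
  rewrite <- Eq in Hn. destruct (d c) as [[|l]|] eqn:Ec.
  - rewrite (d_zero _ _ (D_arg _ _ Dc) Dc Ec) in Hn. destruct n; [|simpl in Hn; lia].
    rewrite (tw_zero _ f_tw). discriminate.
  - assert (X := d_star_lt u c Dc (D_arg _ _ Dc) Duc). rewrite Ec in X.
    specialize (X (olt_fin0_S _) (olt_fin_omega _)). rewrite <- f_sample in X by exact Duc.
    intro e. assert (M := tw_mono _ f_tw _ _ Hn). rewrite e in M. apply omega_ole in M.
    rewrite M in X. destruct X; contradiction.
  - apply (f_fin _ Duc). apply d_last_star; eauto using D_last.
Qed.

Lemma star_sample a : D (SApp (TStar u) a) -> star f (d a) = d (SApp (TStar u) a).
Proof.
  intros Ha. assert (Da := D_arg _ _ Ha).
  assert (D1 : D (SApp u (SApp (TStar u) a))) by (eapply D_step; [exact Ha | constructor]).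
  assert (D2 : D (SApp u (SSuc (SApp (TStar u) a)))) by (eapply D_step; [exact Ha | constructor]).
  assert (Hsucc : forall j, d (SApp (TStar u) a) = fin j -> ole (d a) (f (fin (S j)))).
  { intros j Ej. replace (fin (S j)) with (d (SSuc (SApp (TStar u) a)))
      by (rewrite d_suc, Ej; eauto using D_arg).
    rewrite f_sample by exact D2. apply d_star_succ; auto. rewrite Ej. apply olt_fin_omega. }
  destruct (d a) as [[|n]|] eqn:Ea.
  - rewrite (d_zero _ _ Da Ha Ea). apply (tw_zero _ (star_tw f f_tw)).
  - apply star_unique; auto. rewrite f_sample by exact D1. rewrite <- Ea.
    apply d_star_lt; auto; rewrite Ea; auto using olt_fin0_S, olt_fin_omega.
  - assert (B := star_arg_omega_fin a Ha Ea).
    destruct (d (SApp (TStar u) a)) as [j|] eqn:Ej.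
    + apply star_unique; auto. specialize (B j (ole_refl _)).
      destruct (f (fin j)); [apply olt_fin_omega | contradiction].
    + apply star_omega_of_fin; auto. intro n. apply B, ole_omega.
Qed.

Lemma star_fin_sample a :
  D (SApp (TStar u) a) -> d (SLast (TStar u)) = omega -> forall n, star f (fin n) <> omega.
Proof.
  intros Ha L n.
  assert (D1 : D (SApp u (SApp (TStar u) a))) by (eapply D_step; [exact Ha | constructor]).
  assert (Lu : d (SLast u) = omega) by (apply d_last_star; eauto using D_last).
  assert (Fw : f omega = omega).
  { rewrite <- Lu at 1. rewrite f_sample by exact (D_app_last _ _ D1).
    apply d_last_omega; eauto using D_last, D_app_last. }
  destruct n as [|n]; [rewrite (tw_zero _ (star_tw f f_tw)); discriminate|].
  intro e. assert (X := star_le_pw f f_tw (fin (S n))). rewrite e, Fw in X. contradiction.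
Qed.

End StarCase.

Lemma eval_sample t : basic t ->
  (forall a, D (SApp t a) -> eval var_warp t (d a) = d (SApp t a)) /\
  (forall a, D (SApp t a) -> d (SLast t) = omega -> forall n, eval var_warp t (fin n) <> omega).
Proof.
  induction 1 as [i | u w Bu [Iu Ju] Bw [Iw Jw] | u Bu [Iu Ju] | ]; simpl.
  - split; [apply var_warp_sample | intros; apply var_warp_fin; auto].
  - assert (Hs : forall a, D (SApp (TMul u w) a) -> D (SApp u (SApp w a)))
      by (intros a Ha; eapply D_step; [exact Ha | constructor]).
    split.
    + intros a Ha. rewrite Iw, Iu by eauto using D_arg. symmetry; apply d_mul; auto.
    + intros a Ha L n.
      assert (Hwa : D (SApp w a)) by exact (D_arg _ _ (Hs a Ha)).
      destruct (d_last_mul u w (D_last _ _ Ha) (D_last _ _ (Hs a Ha)) (D_last _ _ Hwa) L) as [Lu Lw].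
      destruct (eval var_warp w (fin n)) as [j|] eqn:Ej; [|exfalso; exact (Jw a Hwa Lw n Ej)].
      exact (Ju _ (Hs a Ha) Lu j).
  - assert (Hf : is_tw (eval var_warp u)) by (apply eval_tw; auto using var_warp_tw).
    split; [apply star_sample | apply star_fin_sample]; auto.
  - split; [intros a Ha; symmetry; apply d_one; eauto using D_arg | discriminate].
Qed.

End Completeness.

Lemma countermodel_of_diagram (l : list term) k d :
  Forall basic l ->
  is_diagram (saturation (fun a => exists t, In t l /\ a = SApp t (SVar k))) d ->
  Forall (fun t => olt (d (SApp t (SVar k))) (d (SVar k))) l ->
  exists v m, (forall i, is_tw (v i)) /\ Forall (fun t => olt (eval v t m) m) l.
Proof.
  intros Hb Hd Hlt. set (D := saturation _) in Hd.
  destruct (finite_values_bounded d (SVar k :: flat_map (fun t => reach_app t (SVar k)) l)) as [N HN].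
  assert (HN' : forall s, D s -> forall j, d s = fin j -> j <= N)
    by (intros s Hs; apply HN, saturation_in_reach, Hs).
  destruct Hd as (H1 & H2 & H3 & H4 & H5 & H6 & _ & H8 & H9 & H10 & H11 & H12).
  exists (var_warp D d N), (d (SVar k)). split; [intro i; apply var_warp_tw|].
  rewrite Forall_forall in *. intros t Ht.
  assert (Dt : D (SApp t (SVar k))) by (exists (SApp t (SVar k)); split; [eauto | apply rt_refl]).
  destruct (eval_sample D d (saturation_step _) N HN' H1 H2 H3 H4 H5 H6 H8 H9 H10 H11 H12 t (Hb t Ht))
    as [Ht' _].
  rewrite (Ht' _ Dt). apply Hlt, Ht.
Qed.

Theorem proposition3p10 (t1 : term) (ts : list term) (k : nat) :
  Forall basic (t1 :: ts) ->
  (~ W_models_le TOne (join_list t1 ts) <->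
   exists d : sample -> onat,
     is_diagram (saturation (fun a => exists t, In t (t1 :: ts) /\ a = SApp t (SVar k))) d /\
     Forall (fun t => olt (d (SApp t (SVar k))) (d (SVar k))) (t1 :: ts)).
Proof.
  intros Hb. rewrite not_models_join_iff. split.
  - intros (v & m & V & Hlt). exact (diagram_of_countermodel _ k v m Hb V Hlt).
  - intros (d & Hd & Hlt). exact (countermodel_of_diagram _ k d Hb Hd Hlt).
Qed.
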